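(* Let $N$ be a positive integer and let $E$ and $F$ each be a union of $N$ pairwise disjoint closed (nondegenerate) subarcs of $\mathbb{T}$. If $\hat\chi_E(n)=\hat\chi_F(n)$ for $n=0,1,\dots,N$, then $E=F$.
   Context: $\mathbb{T}$ is the unit circle with normalized Lebesgue measure; $\chi_E$ is the indicator function of $E$, and $\hat f(n)=\frac{1}{2\pi}\int_0^{2\pi} f(e^{i\theta})e^{-in\theta}\,d\theta$. *)

From HB Require Import structures.
From mathcomp Require Import all_boot all_order all_algebra.
From mathcomp Require Import all_classical all_reals all_analysis.
Set Implicit Arguments. Unset Strict Implicit. Unset Printing Implicit Defensive.
Import Order.TTheory GRing.Theory Num.Theory.
Import numFieldNormedType.Exports.
Local Open Scope classical_set_scope.
Local Open Scope ring_scope.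

(* Subsets of the unit circle T are represented by 2*pi-periodic sets of
   angles theta : R (the point e^{i theta} belongs to the subset iff theta
   belongs to the periodic set). *)

Definition arc {R : realType} (a b : R) : set R :=
  [set t | exists k : int, a <= t + k%:~R * (2 * pi) <= b].

Definition good_arc {R : realType} (a b : R) : Prop := a < b /\ b < a + 2 * pi.

Definition union_of_disjoint_arcs {R : realType} (N : nat) (E : set R) : Prop :=
  exists a b : 'I_N -> R,
    (forall i, good_arc (a i) (b i)) /\
    (forall i j, i != j -> arc (a i) (b i) `&` arc (a j) (b j) = set0) /\
    E = \bigcup_(i in [set: 'I_N]) arc (a i) (b i).

(* Real and imaginary parts of the Fourier coefficient
   hat(chi_E)(n) = (1/2pi) int_0^{2pi} chi_E(e^{it}) e^{-int} dt
   (Re = (1/2pi) int chi_E cos(nt), Im = -(1/2pi) int chi_E sin(nt)). *)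
Definition fourier_re {R : realType} (E : set R) (n : nat) : R :=
  (2 * pi)^-1 * Rintegral lebesgue_measure `[0, 2 * pi]%classic
                  (fun t => \1_E t * cos (n%:R * t)).

Definition fourier_im {R : realType} (E : set R) (n : nat) : R :=
  - ((2 * pi)^-1 * Rintegral lebesgue_measure `[0, 2 * pi]%classic
                  (fun t => \1_E t * sin (n%:R * t))).

From Pilot Require Import Defs.
From HB Require Import structures.
From mathcomp Require Import all_boot all_order all_algebra.
From mathcomp Require Import all_classical all_reals all_analysis.
From mathcomp Require Import ring lra measurable_realfun.
Import Order.TTheory GRing.Theory Num.Theory.
Import numFieldNormedType.Exports.
Local Open Scope classical_set_scope.
Local Open Scope ring_scope.

(* Let P(t) = prod_i (cos ((b_i - a_i) / 2) - cos (t - (a_i + b_i) / 2)), one factor per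
   arc [a_i, b_i] of E.  P is a trigonometric polynomial of degree N which is <= 0 on E,
   > 0 off E and < 0 inside the arcs of E.  Since the Fourier coefficients of chi_E and
   chi_F agree up to N, int (chi_E - chi_F) P = 0, although the integrand is <= 0
   everywhere.  If t were in E but not in F, then, F being closed, the integrand would be
   bounded away from 0 on a small interval inside an arc of E, making the integral
   negative.  Hence E is contained in F, and F in E by symmetry. *)

Section Circle.
Context {R : realType}.
Implicit Types (a b c h p t u x : R) (k : int).

Lemma periodic_intshift {T : Type} {f : R -> T} {p} :
  (forall u, f (u + p) = f u) -> forall u k, f (u + k%:~R * p) = f u.
Proof.
move=> fp; have fpn n u : f (u + n%:R * p) = f u.
  by elim: n u => [|n IHn] u; rewrite ?mul0r ?addr0 // -natr1 mulrDl mul1r addrA fp IHn.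
move=> u [] n; first exact: fpn.
by rewrite NegzE mulrNz mulNr -(fpn n.+1 (u - _)) subrK.
Qed.

Lemma twopi_gt0 : 0 < 2 * pi :> R.
Proof. exact: mulr_gt0 (ltr0Sn _ 1) (pi_gt0 R). Qed.

Lemma cos_2pi_intshift u k : cos (u + k%:~R * (2 * pi)) = cos u.
Proof. by apply: periodic_intshift => v; rewrite -[2]/(2%:R) mulr_natl cosD2pi. Qed.

Lemma intshift_into_period {p} x c : 0 < p -> exists k, c <= x + k%:~R * p < c + p.
Proof.
move=> p0; exists (- Num.floor ((x - c) / p)); rewrite mulrNz mulNr.
have le_fl := floor_le ((x - c) / p); have gt_fl := floorD1_gt ((x - c) / p).
rewrite ler_pdivlMr // in le_fl; rewrite ltr_pdivrMr // intrD mulrDl mul1r in gt_fl.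
by apply/andP; split; lra.
Qed.

Lemma cos_le_cos_norm h u : 0 <= h <= pi -> `|u| <= pi ->
  (cos h <= cos u) = (`|u| <= h).
Proof.
move=> /andP[h0 hpi] upi.
by rewrite -[cos u]cos_norm !leNgt ltr_cos ?in_itv /= ?h0 ?hpi ?normr_ge0.
Qed.

Lemma cos_lt_cos_norm h u : 0 <= h <= pi -> `|u| <= pi ->
  (cos h < cos u) = (`|u| < h).
Proof.
move=> /andP[h0 hpi] upi.
by rewrite -[cos u]cos_norm ltr_cos ?in_itv /= ?h0 ?hpi ?normr_ge0.
Qed.

Lemma arc_2pi_shift a b t : Defs.arc a b (t + 2 * pi) = Defs.arc a b t.
Proof.
rewrite propeqE; split=> -[k hk].
  exists (k + 1); suff -> : t + (k + 1)%:~R * (2 * pi) = t + 2 * pi + k%:~R * (2 * pi) by [].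
  by rewrite intrD; ring.
exists (k - 1); suff -> : t + 2 * pi + (k - 1)%:~R * (2 * pi) = t + k%:~R * (2 * pi) by [].
by rewrite intrD; ring.
Qed.

(* The arc is the set of angles whose distance to the midpoint (a + b) / 2, modulo 2 pi,
   is at most the half-length (b - a) / 2 < pi; cos is decreasing there. *)
Definition arc_gauge a b t := cos ((b - a) / 2) - cos (t - (a + b) / 2).

Lemma arc_gaugeE a b t : good_arc a b -> Defs.arc a b t <-> arc_gauge a b t <= 0.
Proof.
move=> [ab ba]; have pi0 := pi_gt0 R; rewrite /arc_gauge subr_le0.
have hI : 0 <= (b - a) / 2 <= pi by apply/andP; split; lra.
have shiftE k : cos (t - (a + b) / 2) = cos (t + k%:~R * (2 * pi) - (a + b) / 2).
  by rewrite -(cos_2pi_intshift _ k); congr cos; ring.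
split=> [[k /andP[tka tkb]]|].
  by rewrite (shiftE k) cos_le_cos_norm // ler_norml; apply/andP; split; lra.
have [k /andP[k1 k2]] := intshift_into_period (t - (a + b) / 2) (- pi) twopi_gt0.
rewrite (shiftE k) cos_le_cos_norm; [|by []|by rewrite ler_norml; apply/andP; split; lra].
by rewrite ler_norml => /andP[h1 h2]; exists k; apply/andP; split; lra.
Qed.

Lemma arc_gauge_lt0 {a b t} : good_arc a b -> a < t < b -> arc_gauge a b t < 0.
Proof.
move=> [ab ba] /andP[hat htb]; have pi0 := pi_gt0 R.
rewrite /arc_gauge subr_lt0 cos_lt_cos_norm; first by rewrite ltr_norml; apply/andP; split; lra.
  by apply/andP; split; lra.
by rewrite ler_norml; apply/andP; split; lra.
Qed.

Lemma arc_gauge_gt0 {a b t} : good_arc a b -> ~ Defs.arc a b t -> 0 < arc_gauge a b t.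
Proof. by move=> ab; rewrite arc_gaugeE // ltNge => /negP. Qed.

Lemma nbhs_itv_cc_meets_oo {P : R -> Prop} {a b x : R} :
  a < b -> a <= x <= b ->
  (\forall s \near x, P s) -> exists s, a < s < b /\ P s.
Proof.
move=> ab /andP[ax xb] /nbhs_normP[d /= d0 Pd].
have [w [w0 [wd wab]]] : exists w, 0 < w /\ w < d /\ w < (b - a) / 2.
  have [dab|abd] := lerP (d / 2) ((b - a) / 4).
    by exists (d / 2); split; lra.
  by exists ((b - a) / 4); split; lra.
have [xm|mx] := ltP x ((a + b) / 2); [exists (x + w)|exists (x - w)];
  (split; [apply/andP; split; lra|apply: Pd]);
  by rewrite /ball_ /= ltr_norml; apply/andP; split; lra.
Qed.

End Circle.

Inductive trigpoly {R : realType} (n : nat) : (R -> R) -> Prop :=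
| trigpoly_cos k of (k <= n)%N : trigpoly n (fun t => cos (k%:R * t))
| trigpoly_sin k of (k <= n)%N : trigpoly n (fun t => sin (k%:R * t))
| trigpoly_add f g of trigpoly n f & trigpoly n g : trigpoly n (fun t => f t + g t)
| trigpoly_scale (c : R) f of trigpoly n f : trigpoly n (fun t => c * f t).
Arguments trigpoly_cos {R n} k.
Arguments trigpoly_sin {R n} k.
Arguments trigpoly_add {R n f g}.
Arguments trigpoly_scale {R n} c {f}.

Section TrigPoly.
Context {R : realType}.
Implicit Types (f g : R -> R) (c t : R).

Lemma trigpoly_ext {n f g} : trigpoly n f -> f =1 g -> trigpoly n g.
Proof. by move=> tf /funext <-. Qed.

Lemma trigpoly_widen {n m f} : (n <= m)%N -> trigpoly n f -> trigpoly m f.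
Proof.
move=> nm; elim=> {f} [k kn|k kn|f g _ tf _ tg|c f _ tf].
- by apply: trigpoly_cos; apply: leq_trans nm.
- by apply: trigpoly_sin; apply: leq_trans nm.
- exact: trigpoly_add.
- exact: trigpoly_scale.
Qed.

Lemma trigpoly_harmonic {n} k c1 c2 : (k <= n)%N ->
  trigpoly n (fun t => c1 * cos (k%:R * t) + c2 * sin (k%:R * t)).
Proof. by move=> kn; apply: trigpoly_add; apply: trigpoly_scale; constructor. Qed.

Lemma trigpoly_mul_cos_sin {n f} : trigpoly n f ->
  trigpoly n.+1 (fun t => f t * cos t) /\ trigpoly n.+1 (fun t => f t * sin t).
Proof.
have cos1 : trigpoly n.+1 (cos : R -> R).
  by apply: trigpoly_ext (trigpoly_cos 1 (ltn0Sn n)) _ => t; rewrite mul1r.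
have sin1 : trigpoly n.+1 (sin : R -> R).
  by apply: trigpoly_ext (trigpoly_sin 1 (ltn0Sn n)) _ => t; rewrite mul1r.
have zero : trigpoly n.+1 (fun=> 0 : R).
  by apply: trigpoly_ext (trigpoly_scale 0 cos1) _ => t; rewrite mul0r.
have harmonics j c1 c2 c3 c4 : (j.+1 <= n)%N -> trigpoly n.+1 (fun t =>
    c1 * cos (j.+2%:R * t) + c2 * sin (j.+2%:R * t) + (c3 * cos (j%:R * t) + c4 * sin (j%:R * t))).
  by move=> jn; apply: trigpoly_add; apply: trigpoly_harmonic => //; apply/leqW/ltnW.
have j2E j t : j.+2%:R * t = j.+1%:R * t + t by rewrite -natr1 mulrDl mul1r.
have jE j t : j%:R * t = j.+1%:R * t - t by rewrite -natr1 mulrDl mul1r addrK.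
elim=> {f} [[|j] jn|[|j] jn|f g _ [f1 f2] _ [g1 g2]|c f _ [f1 f2]].
- by split; [apply: trigpoly_ext cos1 _|apply: trigpoly_ext sin1 _] => t;
    rewrite mul0r cos0 mul1r.
- split; [apply: trigpoly_ext (harmonics j (1/2) 0 (1/2) 0 jn) _
         |apply: trigpoly_ext (harmonics j 0 (1/2) 0 (-1/2) jn) _] => t;
  by rewrite (j2E j t) (jE j t) ?cosB ?sinB ?cosD ?sinD; field.
- by split; apply: trigpoly_ext zero _ => t; rewrite mul0r sin0 mul0r.
- split; [apply: trigpoly_ext (harmonics j 0 (1/2) 0 (1/2) jn) _
         |apply: trigpoly_ext (harmonics j (-1/2) 0 (1/2) 0 jn) _] => t;
  by rewrite (j2E j t) (jE j t) ?cosB ?sinB ?cosD ?sinD; field.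
- by split; [apply: trigpoly_ext (trigpoly_add f1 g1) _
            |apply: trigpoly_ext (trigpoly_add f2 g2) _] => t; rewrite mulrDl.
- by split; [apply: trigpoly_ext (trigpoly_scale c f1) _
            |apply: trigpoly_ext (trigpoly_scale c f2) _] => t; rewrite mulrA.
Qed.

Lemma trigpoly_mul_deg1 {n f g} : trigpoly n f -> trigpoly 1 g ->
  trigpoly n.+1 (fun t => f t * g t).
Proof.
move=> tf; have [fcos fsin] := trigpoly_mul_cos_sin tf.
have tf1 := trigpoly_widen (leqnSn n) tf.
elim=> {g} [[|[|//]] _|[|[|//]] _|g h _ tg _ th|c g _ tg].
- by apply: trigpoly_ext tf1 _ => t; rewrite mul0r cos0 mulr1.
- by apply: trigpoly_ext fcos _ => t; rewrite mul1r.
- by apply: trigpoly_ext (trigpoly_scale 0 tf1) _ => t; rewrite !mul0r sin0 mulr0.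
- by apply: trigpoly_ext fsin _ => t; rewrite mul1r.
- by apply: trigpoly_ext (trigpoly_add tg th) _ => t; rewrite mulrDr.
- by apply: trigpoly_ext (trigpoly_scale c tg) _ => t; rewrite mulrCA.
Qed.

Lemma trigpoly_prod n (g : 'I_n -> R -> R) : (forall i, trigpoly 1 (g i)) ->
  trigpoly n (fun t => \prod_(i < n) g i t).
Proof.
elim: n g => [|n IHn] g tg.
  by apply: trigpoly_ext (trigpoly_cos 0 (leqnn 0)) _ => t; rewrite big_ord0 mul0r cos0.
apply: trigpoly_ext (trigpoly_mul_deg1 (IHn _ (fun i => tg (widen_ord (leqnSn n) i)))
  (tg ord_max)) _ => t.
by rewrite big_ord_recr.
Qed.

Lemma trigpoly_continuous {n f} : trigpoly n f -> continuous f.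
Proof.
elim=> {f} [k _|k _|f g _ cf _ cg|c f _ cf] t.
- apply: (continuous_comp (f := fun t => k%:R * t)); first exact: mulrl_continuous.
  exact: continuous_cos.
- apply: (continuous_comp (f := fun t => k%:R * t)); first exact: mulrl_continuous.
  exact: continuous_sin.
- exact: (continuousD (cf t) (cg t)).
- exact: (continuousM (cvg_cst c) (cf t)).
Qed.

Lemma trigpoly_bounded {n f} : trigpoly n f -> exists M, forall t, `|f t| <= M.
Proof.
elim=> {f} [k _|k _|f g _ [M1 hf] _ [M2 hg]|c f _ [M hf]].
- by exists 1 => t; apply: cos_max.
- by exists 1 => t; apply: sin_max.
- by exists (M1 + M2) => t; apply: le_trans (ler_normD _ _) (lerD (hf t) (hg t)).
- by exists (`|c| * M) => t; rewrite normrM ler_wpM2l.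
Qed.

Lemma arc_gauge_trigpoly (x y : R) : trigpoly 1 (arc_gauge x y).
Proof.
apply: trigpoly_ext (trigpoly_add
  (trigpoly_scale (cos ((y - x) / 2)) (trigpoly_cos (n := 1) 0 isT))
  (trigpoly_harmonic (n := 1) 1 (- cos ((x + y) / 2)) (- sin ((x + y) / 2)) isT)) _ => t.
by rewrite /arc_gauge mul0r cos0 !mul1r cosB; ring.
Qed.

End TrigPoly.

Lemma indic_ge0_le1 {T : Type} (R : realType) (A : set T) t : 0 <= (\1_A t : R) <= 1.
Proof. by rewrite indicE; case: (t \in A); rewrite ?ler01 ?lexx. Qed.

Lemma indic_shift {R : realType} {A : set R} {p : R} : (forall u, A (u + p) = A u) ->
  periodic (\1_A : R -> R) p.
Proof.
move=> Ap u; rewrite !indicE.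
suff -> : (u + p \in A) = (u \in A) by [].
by apply/idP/idP => /set_mem; rewrite ?Ap => ?; apply: mem_set; rewrite ?Ap.
Qed.

Section Integrals.
Context {R : realType}.
Local Notation mu := (@lebesgue_measure R).
Implicit Types (g : R -> R) (x y M : R).

Lemma bounded_integrable_itv x y {g M} : measurable_fun setT g ->
  (forall t, `|g t| <= M) -> mu.-integrable `[x, y] (EFin \o g).
Proof.
move=> mg gM; apply: measurable_bounded_integrable.
- exact: measurable_itv.
- exact/compact_finite_measure/segment_compact.
- exact: measurable_funS mg.
- exists M; split; first by rewrite num_real.
  by move=> z Mz t _; apply: le_trans (gM t) (ltW Mz).
Qed.

Lemma Rintegral_indic_itv x y a w : x <= a -> a + w <= y -> 0 <= w ->
  Rintegral mu `[x, y] (\1_(`[a, a + w]%classic)) = w.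
Proof.
move=> xa awy w0; rewrite /Rintegral integral_indic; [|exact: measurable_itv..].
rewrite setIidl; last first.
  by move=> t /=; rewrite !in_itv /= => /andP[h1 h2]; apply/andP; split; lra.
have := lebesgue_measure_itv `[a, a + w]; rewrite /= lte_fin => ->.
have [->|wgt0] := eqVneq w 0; first by rewrite addr0 ltxx.
by rewrite ltrDl lt_neqAle eq_sym wgt0 w0 /= addrAC subrr add0r.
Qed.

Lemma Rintegral_itv_lt0 g x y s c : x <= s < y ->
  mu.-integrable `[x, y] (EFin \o g) -> (forall t, x <= t <= y -> g t <= 0) ->
  c < 0 -> (\forall t \near s, g t <= c) -> Rintegral mu `[x, y] g < 0.
Proof.
move=> /andP[xs sy] gint gle0 c0 /nbhs_normP[d /= d0 gc].
have [w [w0 [wd swy]]] : exists w, 0 < w /\ w < d /\ s + w <= y.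
  have [dy|yd] := lerP (d / 2) (y - s); first by exists (d / 2); split; lra.
  by exists (y - s); split; lra.
pose J := `[s, s + w]%classic.
have mJ : measurable_fun setT (\1_J : R -> R).
  by apply: measurable_indic; exact: measurable_itv.
have indicJ_le1 t : `|\1_J t| <= 1 :> R.
  by case/andP: (indic_ge0_le1 R J t) => h0 h1; rewrite ger0_norm.
have intJ := bounded_integrable_itv x y mJ indicJ_le1.
have g_le : forall t, `[x, y]%classic t -> g t <= c * \1_J t.
  move=> t /=; rewrite in_itv /= => xty; rewrite indicE.
  case: (boolP (t \in J)) => [|_]; last by rewrite mulr0 gle0.
  rewrite inE /J /= in_itv /= mulr1 => /andP[st tsw]; apply: gc.
  by rewrite /ball_ /= ltr_norml; apply/andP; split; lra.
have intcJ : mu.-integrable `[x, y] (EFin \o (fun t => c * \1_J t)).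
  apply: (bounded_integrable_itv _ _ (M := `|c|)); first exact: measurable_funM.
  by move=> t; rewrite normrM -[leRHS]mulr1 ler_wpM2l.
apply: (@le_lt_trans _ _ (Rintegral mu `[x, y] (fun t => c * \1_J t))).
  by apply: le_Rintegral => //; exact: measurable_itv.
by rewrite RintegralZl ?Rintegral_indic_itv ?pmulr_llt0 // ltW.
Qed.

Lemma Rintegral_periodic_lt0 (g : R -> R) (s c : R) : periodic g (2 * pi) ->
  mu.-integrable `[0, 2 * pi] (EFin \o g) -> (forall t, g t <= 0) ->
  c < 0 -> (\forall t \near s, g t <= c) -> Rintegral mu `[0, 2 * pi] g < 0.
Proof.
move=> gper gint gle0 c0 /nbhs_normP[d /= d0 gc].
have [k /andP[sk0 sk2pi]] := intshift_into_period s 0 twopi_gt0.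
apply: (Rintegral_itv_lt0 _ _ _ (s + k%:~R * (2 * pi)) c) => //.
  by rewrite sk0; rewrite add0r in sk2pi.
apply/nbhs_normP; exists d => // u /= hu.
rewrite -(periodic_intshift gper u (- k)); apply: gc.
by move: hu; rewrite /ball_ /= mulrNz mulNr opprB addrA.
Qed.

Lemma trigpoly_measurable {n g} : trigpoly n g -> measurable_fun setT g.
Proof. by move/trigpoly_continuous/continuous_measurable_fun. Qed.

Lemma indic_trigpoly_integrable (E : set R) n g x y : measurable E -> trigpoly n g ->
  mu.-integrable `[x, y] (EFin \o (fun t => \1_E t * g t)).
Proof.
move=> mE tg; have [M gM] := trigpoly_bounded tg.
apply: (bounded_integrable_itv _ _ (M := M)).
  exact: measurable_funM (measurable_indic mE) (trigpoly_measurable tg).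
move=> t; rewrite normrM; case/andP: (indic_ge0_le1 R E t) => h0 h1.
by rewrite ger0_norm // -[leRHS]mul1r ler_pM.
Qed.

Lemma fourier_trigpoly_Rintegral (E F : set R) N g : measurable E -> measurable F ->
  (forall n : nat, (n <= N)%N ->
     fourier_re E n = fourier_re F n /\ fourier_im E n = fourier_im F n) ->
  trigpoly N g ->
  Rintegral mu `[0, 2 * pi] (fun t => \1_E t * g t) =
  Rintegral mu `[0, 2 * pi] (fun t => \1_F t * g t).
Proof.
move=> mE mF coefEF.
have pi2_neq0 : (2 * pi : R)^-1 != 0.
  by rewrite invr_eq0 mulf_neq0 // gt_eqF // pi_gt0.
elim=> {g} [k kN|k kN|g h tg IHg th IHh|c g tg IHg].
- by have [reEF _] := coefEF k kN; apply: (mulfI pi2_neq0); exact: reEF.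
- by have [_ /oppr_inj imEF] := coefEF k kN; apply: (mulfI pi2_neq0); exact: imEF.
- under eq_Rintegral do rewrite mulrDr.
  under [RHS]eq_Rintegral do rewrite mulrDr.
  by rewrite !RintegralD ?IHg ?IHh //; apply: (indic_trigpoly_integrable _ N).
- under eq_Rintegral do rewrite mulrCA.
  under [RHS]eq_Rintegral do rewrite mulrCA.
  by rewrite !RintegralZl ?IHg //; apply: (indic_trigpoly_integrable _ N).
Qed.

Lemma measurable_arc (x y : R) : good_arc x y -> measurable (Defs.arc x y).
Proof.
move=> xy; rewrite (_ : Defs.arc x y = setT `&` arc_gauge x y @^-1` `]-oo, 0]).
  exact: (trigpoly_measurable (arc_gauge_trigpoly x y)) measurableT _ (measurable_itv _).
by apply/seteqP; split=> t /=; rewrite in_itv /= arc_gaugeE //; case.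
Qed.

End Integrals.

Section ArcSystem.
Context {R : realType} {N : nat} (a b : 'I_N -> R).

Definition arcs_union : set R := \bigcup_(i in [set: 'I_N]) Defs.arc (a i) (b i).

Definition arcs_poly (t : R) : R := \prod_(i < N) arc_gauge (a i) (b i) t.

Lemma arcs_union_2pi_shift t : arcs_union (t + 2 * pi) = arcs_union t.
Proof.
by rewrite propeqE; split=> -[i _]; rewrite ?arc_2pi_shift => hi; exists i;
  rewrite ?arc_2pi_shift.
Qed.

Lemma arcs_poly_trigpoly : trigpoly N arcs_poly.
Proof. exact: trigpoly_prod (fun i => arc_gauge_trigpoly (a i) (b i)). Qed.

Lemma arcs_poly_2pi_shift : periodic arcs_poly (2 * pi).
Proof.
move=> t; apply: eq_bigr => i _.
by rewrite /arc_gauge addrAC -[2 * pi]mul1r -[1]/(1%:~R) cos_2pi_intshift.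
Qed.

Hypothesis arcs_good : forall i, good_arc (a i) (b i).
Hypothesis arcs_disjoint :
  forall i j, i != j -> Defs.arc (a i) (b i) `&` Defs.arc (a j) (b j) = set0.

Lemma measurable_arcs_union : measurable arcs_union.
Proof.
apply: fin_bigcup_measurable; first exact: finite_finset.
by move=> i _; exact: measurable_arc.
Qed.

Lemma arcs_poly_gt0 t : ~ arcs_union t -> 0 < arcs_poly t.
Proof.
move=> tU; apply: prodr_gt0 => i _; apply: (arc_gauge_gt0 (arcs_good i)) => ti.
by apply: tU; exists i.
Qed.

Lemma arcs_poly_other_gt0 i t : Defs.arc (a i) (b i) t ->
  0 < \prod_(j < N | j != i) arc_gauge (a j) (b j) t.
Proof.
move=> ti; apply: prodr_gt0 => j ji; apply: (arc_gauge_gt0 (arcs_good j)) => tj.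
by have := arcs_disjoint _ _ ji; rewrite -subset0 => /(_ t); apply.
Qed.

Lemma arcs_poly_le0 t : arcs_union t -> arcs_poly t <= 0.
Proof.
move=> [i _ ti]; rewrite /arcs_poly (bigD1 i) //= pmulr_lle0 -?arc_gaugeE //.
exact: arcs_poly_other_gt0.
Qed.

Lemma arcs_poly_lt0 {i t} : a i < t < b i -> arcs_poly t < 0.
Proof.
move=> ti; have gi_lt0 := arc_gauge_lt0 (arcs_good i) ti.
rewrite /arcs_poly (bigD1 i) //= pmulr_llt0 //.
by apply: arcs_poly_other_gt0; rewrite arc_gaugeE // ltW.
Qed.

Lemma open_arcs_union_compl : open (~` arcs_union).
Proof.
rewrite openE => t tU; have gauge_gt0 i : \forall s \near t, 0 < arc_gauge (a i) (b i) s.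
  apply: (cvgr_gt _ (trigpoly_continuous (arc_gauge_trigpoly (a i) (b i)) t)).
  by apply: (arc_gauge_gt0 (arcs_good i)) => ti; apply: tU; exists i.
apply: filterS (filter_forall _ gauge_gt0) => s gs_gt0 [i _].
by rewrite arc_gaugeE // leNgt gs_gt0.
Qed.

Lemma indic_sub_mul_arcs_poly_le0 (F : set R) t :
  (\1_arcs_union t - \1_F t) * arcs_poly t <= 0.
Proof.
case/andP: (indic_ge0_le1 R F t) => F0 F1; rewrite [\1_arcs_union t]indicE.
have [tU|tU] := boolP (t \in arcs_union).
  by apply: mulr_ge0_le0; [rewrite subr_ge0|apply/arcs_poly_le0/set_mem].
apply: mulr_le0_ge0; first by rewrite sub0r oppr_le0.
by apply/ltW/arcs_poly_gt0 => /mem_set; apply/negP.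
Qed.

Local Notation mu := (@lebesgue_measure R).

Lemma indic_sub_mul_arcs_poly_integrable (F : set R) x y : measurable F ->
  mu.-integrable `[x, y] (EFin \o (fun u => (\1_arcs_union u - \1_F u) * arcs_poly u)).
Proof.
move=> mF; have [M PM] := trigpoly_bounded arcs_poly_trigpoly.
apply: (bounded_integrable_itv _ _ (M := M)).
  apply: measurable_funM (trigpoly_measurable arcs_poly_trigpoly).
  exact: measurable_funB (measurable_indic measurable_arcs_union) (measurable_indic mF).
move=> u; rewrite normrM -[M]mul1r ler_pM //.
case/andP: (indic_ge0_le1 R F u) (indic_ge0_le1 R arcs_union u) => F0 F1 /andP[U0 U1].
by rewrite ler_norml; apply/andP; split; lra.
Qed.

Lemma Rintegral_indic_sub_mul_arcs_poly_lt0 (F : set R) t : measurable F ->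
  (forall u, F (u + 2 * pi) = F u) -> open (~` F) -> arcs_union t -> ~ F t ->
  Rintegral mu `[0, 2 * pi] (fun u => (\1_arcs_union u - \1_F u) * arcs_poly u) < 0.
Proof.
move=> mF Fper; rewrite openE => oF [i _ [k tk]] Ft.
have [ab _] := arcs_good i.
have nFtk : ~ F (t + k%:~R * (2 * pi)) by rewrite (periodic_intshift Fper).
have [s [si nFs]] := nbhs_itv_cc_meets_oo ab tk (oF _ nFtk).
have Ps_lt0 := arcs_poly_lt0 si.
apply: (Rintegral_periodic_lt0 _ s (arcs_poly s / 2)).
- move=> u.
  by rewrite arcs_poly_2pi_shift (indic_shift Fper) (indic_shift arcs_union_2pi_shift).
- exact: indic_sub_mul_arcs_poly_integrable.
- by move=> u; apply: indic_sub_mul_arcs_poly_le0.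
- lra.
have P_lt : \forall u \near s, arcs_poly u < arcs_poly s / 2.
  by apply: (cvgr_lt _ (trigpoly_continuous arcs_poly_trigpoly s)); lra.
have gauge_lt0 : \forall u \near s, arc_gauge (a i) (b i) u < 0.
  apply: (cvgr_lt _ (trigpoly_continuous (arc_gauge_trigpoly (a i) (b i)) s)).
  exact: arc_gauge_lt0 (arcs_good i) si.
near=> u.
have Uu : arcs_union u.
  by exists i => //; rewrite arc_gaugeE // ltW //; near: u.
have nFu : ~ F u by near: u; exact: oF.
rewrite indicE mem_set // indicE memNset // subr0 mul1r ltW //.
by near: u.
Unshelve. all: by end_near.
Qed.

Lemma Rintegral_indic_sub_mul_arcs_poly_eq0 (F : set R) : measurable F ->
  (forall n : nat, (n <= N)%N -> fourier_re arcs_union n = fourier_re F n /\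
                                fourier_im arcs_union n = fourier_im F n) ->
  Rintegral mu `[0, 2 * pi] (fun u => (\1_arcs_union u - \1_F u) * arcs_poly u) = 0.
Proof.
move=> mF coefUF; under eq_Rintegral do rewrite mulrBl.
rewrite RintegralB; first last.
- exact: indic_trigpoly_integrable mF arcs_poly_trigpoly.
- exact: indic_trigpoly_integrable measurable_arcs_union arcs_poly_trigpoly.
- exact: measurable_itv.
apply/eqP; rewrite subr_eq0; apply/eqP.
exact: fourier_trigpoly_Rintegral measurable_arcs_union mF coefUF arcs_poly_trigpoly.
Qed.

End ArcSystem.

Lemma arcs_union_subset_of_fourier {R : realType} N (a b a' b' : 'I_N -> R) :
  (forall i, good_arc (a i) (b i)) ->
  (forall i j, i != j -> Defs.arc (a i) (b i) `&` Defs.arc (a j) (b j) = set0) ->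
  (forall i, good_arc (a' i) (b' i)) ->
  (forall n : nat, (n <= N)%N ->
     fourier_re (arcs_union a b) n = fourier_re (arcs_union a' b') n /\
     fourier_im (arcs_union a b) n = fourier_im (arcs_union a' b') n) ->
  arcs_union a b `<=` arcs_union a' b'.
Proof.
move=> good disj good' coef t Ut; apply: contrapT => nFt.
have mF := measurable_arcs_union _ _ good'.
have := Rintegral_indic_sub_mul_arcs_poly_lt0 _ _ good disj _ _ mF
  (arcs_union_2pi_shift a' b') (open_arcs_union_compl _ _ good') Ut nFt.
by rewrite Rintegral_indic_sub_mul_arcs_poly_eq0 ?ltxx.
Qed.

Theorem corollary5p3 (R : realType) (N : nat) (E F : set R) :
  (0 < N)%N ->
  union_of_disjoint_arcs N E ->
  union_of_disjoint_arcs N F ->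
  (forall n : nat, (n <= N)%N ->
     fourier_re E n = fourier_re F n /\ fourier_im E n = fourier_im F n) ->
  E = F.
Proof.
move=> _ [a [b [good [disj ->]]]] [a' [b' [good' [disj' ->]]]] coef.
apply/seteqP; split; first exact: arcs_union_subset_of_fourier coef.
apply: arcs_union_subset_of_fourier => // n /coef[reEF imEF].
by split; apply: esym.
Qed.
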